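(* Let $\kappa:G\to[1,\infty)$ and suppose $G$ is $\kappa$-decaying with decay constant $C$. Let $\psi:G\to\mathbb{C}$ satisfy $K:=\|\psi\kappa\|_\infty<\infty$. Then for every normalized 2-cocycle $\sigma$, $\psi\in MCF(G,\sigma)$ and $\|M_\psi\|\le CK$ (operator norm of $M_\psi$ on $C^*_r(G,\sigma)$).
   Context: $\sigma:G\times G\to\mathbb{T}$ is a normalized 2-cocycle ($\sigma(g,h)\sigma(gh,k)=\sigma(h,k)\sigma(g,hk)$, $\sigma(g,e)=\sigma(e,g)=1$); $\Lambda_\sigma(g)$ is the unitary on $\ell^2(G)$ with $(\Lambda_\sigma(g)\xi)(h)=\sigma(g,g^{-1}h)\xi(g^{-1}h)$, $\lambda=\Lambda_1$; $C^*_r(G,\sigma)$ is the operator-norm closure of $\mathrm{span}\,\Lambda_\sigma(G)$. $\mathcal{K}(G)$ = finitely supported functions; $\pi_\lambda(f)=\sum_g f(g)\lambda(g)$. For $\kappa:G\to[1,\infty)$, $\|\xi\|_{2,\kappa}=\|\xi\kappa\|_2$; $G$ is $\kappa$-decaying if $f\mapsto\pi_\lambda(f)$ is bounded from $(\mathcal{K}(G),\|\cdot\|_{2,\kappa})$ to $C^*_r(G,1)$ with operator norm, and the norm of this map is the $\kappa$-decay constant. For $x\in C^*_r(G,\sigma)$, $\widehat x=x\delta_e$. For $\varphi:G\to\mathbb{C}$, $M_\varphi$ is the linear map on $\mathrm{span}\,\Lambda_\sigma(G)$ with $M_\varphi(\Lambda_\sigma(g))=\varphi(g)\Lambda_\sigma(g)$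 (extended to $C^*_r(G,\sigma)$ when bounded). $MCF(G,\sigma)$ is the set of $\varphi$ such that $\sum_g\varphi(g)\widehat x(g)\Lambda_\sigma(g)$ converges in operator norm (as a net of finite partial sums) for every $x\in C^*_r(G,\sigma)$. *)

From HB Require Import structures.
From mathcomp Require Import all_boot all_order all_algebra.
From mathcomp Require Import all_classical all_reals all_analysis.
From mathcomp Require Import complex.
Set Implicit Arguments. Unset Strict Implicit. Unset Printing Implicit Defensive.
Import Order.TTheory GRing.Theory Num.Theory.
Local Open Scope classical_set_scope.
Local Open Scope ring_scope.

Section TwistedGroupAlgebra.
Variables (R : realType) (G : groupType).

Local Notation C := (R[i]).
Definition cabs (z : C) : R := Normc.normc z.

(* (Possibly unbounded / partially defined) operators on C^G; only their
   behaviour on l^2(G) matters. *)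
Definition op := (G -> C) -> (G -> C).

(* ||xi||_2 in the extended reals (+oo when xi is not in l^2(G)). *)
Definition l2norm (xi : G -> C) : \bar R :=
  sqrte (\esum_(g in [set: G]) ((cabs (xi g)) ^+ 2)%:E).

Definition opnorm (T : op) : \bar R :=
  ereal_sup [set l2norm (T xi) | xi in [set xi | (l2norm xi <= 1)%E]].

Definition opsub (T S : op) : op := fun xi h => T xi h - S xi h.

Definition normalized_2cocycle (sigma : G -> G -> C) : Prop :=
  [/\ (forall g h, cabs (sigma g h) = 1),
      (forall g h k, sigma g h * sigma (g * h)%g k = sigma h k * sigma g (h * k)%g),
      (forall g, sigma g 1%g = 1) & (forall g, sigma 1%g g = 1)].

Definition Lambda (sigma : G -> G -> C) (g : G) : op :=
  fun xi h => sigma g (g^-1 * h)%g * xi (g^-1 * h)%g.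

Definition finsupp (f : G -> C) : Prop := finite_set [set g | f g != 0].

Definition pi_sigma (sigma : G -> G -> C) (f : G -> C) : op :=
  fun xi h => \sum_(g \in [set g | f g != 0]) f g * Lambda sigma g xi h.

Definition trivial_cocycle : G -> G -> C := fun _ _ => 1.
Definition pi_lambda (f : G -> C) : op := pi_sigma trivial_cocycle f.

Definition l2k (kappa : G -> R) (f : G -> C) : \bar R :=
  l2norm (fun g => f g * ((kappa g)%:C)%C).

Definition kappa_decaying (kappa : G -> R) : Prop :=
  exists M : R, forall f, finsupp f ->
    (opnorm (pi_lambda f) <= M%:E * l2k kappa f)%E.

Definition decay_constant (kappa : G -> R) : \bar R :=
  ereal_sup [set opnorm (pi_lambda f) |
             f in [set f | finsupp f /\ (l2k kappa f <= 1)%E]].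

Definition in_Cr (sigma : G -> G -> C) (x : op) : Prop :=
  forall eps : R, 0 < eps -> exists f, finsupp f /\
    (opnorm (opsub x (pi_sigma sigma f)) <= eps%:E)%E.

Definition delta_e : G -> C := fun h => if h == 1%g then 1 else 0.

Definition xhat (x : op) : G -> C := x delta_e.

Definition Mpartial (sigma : G -> G -> C) (phi : G -> C) (x : op)
    (F : set G) : op :=
  fun xi h => \sum_(g \in F) phi g * xhat x g * Lambda sigma g xi h.

Definition MCF (sigma : G -> G -> C) (phi : G -> C) : Prop :=
  forall x, in_Cr sigma x -> exists y : op,
    forall eps : R, 0 < eps -> exists F0 : set G, finite_set F0 /\
      forall F : set G, finite_set F -> F0 `<=` F ->
        (opnorm (opsub y (Mpartial sigma phi x F)) <= eps%:E)%E.

End TwistedGroupAlgebra.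

From HB Require Import structures.
From mathcomp Require Import all_boot all_order all_algebra.
From mathcomp Require Import all_classical all_reals all_analysis.
From mathcomp Require Import complex.
From mathcomp Require Import lra.
Set Implicit Arguments. Unset Strict Implicit. Unset Printing Implicit Defensive.
Import Order.TTheory GRing.Theory Num.Theory.
Import numFieldNormedType.Exports.
Local Open Scope classical_set_scope.
Local Open Scope ring_scope.

(* For finitely supported [c] and a unimodular cocycle, the sum
   [sum_g c(g) Lambda_sigma(g) xi] is dominated pointwise by [lambda(|c|) |xi|],
   so kappa-decay gives [||sum_g c(g) Lambda_sigma(g)|| <= C ||c kappa||_2].
   With [c = psi f] this is at most [C K ||f||_2 <= C K ||pi_sigma(f)||], as
   [f = pi_sigma(f) delta_e].  For [x] in [C*_r(G, sigma)] the coefficients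
   [xhat x = x delta_e] are square summable, and the same estimate applied to
   differences of partial sums of [sum_g psi(g) xhat(g) Lambda_sigma(g)] shows
   that they form a Cauchy net for the operator norm; its limit is computed
   pointwise along an increasing sequence of finite sets carrying almost all
   of the l^2 mass of [xhat x]. *)

Section SquaredModulus.
Variable R : realType.
Implicit Types (z w : R[i]) (r : R).

Definition cabs2 z : R := cabs z ^+ 2.

Lemma cabs_ge0 z : 0 <= cabs z.
Proof. by case: z => a b; apply: sqrtr_ge0. Qed.

Lemma cabs2E z : cabs2 z = complex.Re z ^+ 2 + complex.Im z ^+ 2.
Proof. by case: z => a b; rewrite /cabs2 /cabs /= sqr_sqrtr // addr_ge0 ?sqr_ge0. Qed.

Lemma cabs2_ge0 z : 0 <= cabs2 z.
Proof. exact: sqr_ge0. Qed.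

Lemma cabs20 : cabs2 0 = 0.
Proof. by rewrite /cabs2 /cabs Normc.normc0 expr0n. Qed.

Lemma cabs21 : cabs2 1 = 1.
Proof. by rewrite /cabs2 /cabs Normc.normc1 expr1n. Qed.

Lemma cabs2M z w : cabs2 (z * w) = cabs2 z * cabs2 w.
Proof. by rewrite /cabs2 /cabs Normc.normcM exprMn. Qed.

Lemma cabs2N z : cabs2 (- z) = cabs2 z.
Proof. by case: z => a b; rewrite !cabs2E /= !sqrrN. Qed.

Lemma cabs2_real r : cabs2 (r%:C)%C = r ^+ 2.
Proof. by rewrite cabs2E /= expr0n addr0. Qed.

Lemma cabs2_norm z : cabs2 `|z| = cabs2 z.
Proof. exact: cabs2_real. Qed.

Lemma cabs2_le_norm z w : `|z| <= `|w| -> cabs2 z <= cabs2 w.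
Proof. by rewrite lecR => zw; rewrite ler_sqr ?nnegrE ?cabs_ge0. Qed.

Lemma cabs2D_le z w : cabs2 (z + w) <= 2 * cabs2 z + 2 * cabs2 w.
Proof.
case: z w => [a b] [c d]; rewrite !cabs2E /=.
by have := sqr_ge0 (a - c); have := sqr_ge0 (b - d); nra.
Qed.

Lemma cabs2_ReB z w : (complex.Re z - complex.Re w) ^+ 2 <= cabs2 (z - w).
Proof. by case: z w => [a b] [c d]; rewrite cabs2E lerDl sqr_ge0. Qed.

Lemma cabs2_ImB z w : (complex.Im z - complex.Im w) ^+ 2 <= cabs2 (z - w).
Proof. by case: z w => [a b] [c d]; rewrite cabs2E lerDr sqr_ge0. Qed.

End SquaredModulus.

Section FiniteSums.
Variables (R : realType) (T : choiceType).
Implicit Types (X Z : set T) (f g : T -> R).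

Lemma ler_fsum X f g : finite_set X -> (forall x, X x -> f x <= g x) ->
  \sum_(x \in X) f x <= \sum_(x \in X) g x.
Proof.
move=> finX fg; rewrite !fsbig_finite // big_seq [leRHS]big_seq.
by apply: ler_sum => x; rewrite in_fset_set // inE; apply: fg.
Qed.

Lemma fsum_le_subset X Z f : finite_set Z -> X `<=` Z ->
  (forall x, Z x -> 0 <= f x) -> \sum_(x \in X) f x <= \sum_(x \in Z) f x.
Proof.
move=> finZ XZ f_ge0; rewrite [leRHS](fsbigID X) //= setIidr // lerDl.
by apply: fsumr_ge0 => x [/f_ge0].
Qed.

Lemma exists_natSinv_lt (c d : R) : 0 < d -> exists N, c * N.+1%:R^-1 < d.
Proof.
move=> d_gt0; exists (Num.truncn (c / d)).
by rewrite ltr_pdivrMr // mulrC -ltr_pdivrMr // truncnS_gt.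
Qed.

Lemma fsum_tails f B : (forall X, finite_set X -> \sum_(x \in X) f x <= B) ->
  exists U : nat -> set T, [/\ forall n, finite_set (U n),
    {homo U : n m / (n <= m)%N >-> n `<=` m} &
    forall n Z, finite_set Z -> Z `<=` ~` U n ->
      \sum_(x \in Z) f x <= n.+1%:R^-1].
Proof.
move=> fB; pose E := [set \sum_(x \in X) f x | X in finite_set].
have supE : has_sup E.
  split; first by exists (\sum_(x \in set0) f x), set0.
  by exists B => _ [X finX <-]; apply: fB.
have nearly_sup n : exists X, finite_set X /\ sup E - n.+1%:R^-1 < \sum_(x \in X) f x.
  have e_gt0 : 0 < n.+1%:R^-1 :> R by rewrite invr_gt0.
  have [_ [X finX <-] lt_sup] := sup_adherent e_gt0 supE.
  by exists X.
have [S /all_and2 [finS ltS]] := choice nearly_sup.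
exists (fun n => \bigcup_(i in `I_n.+1) S i); split.
- by move=> n; apply: bigcup_finite => //; apply: finite_II.
- by move=> n m nm; apply: bigcup_subset => i /= /leq_trans; apply.
move=> n Z finZ ZU.
have SnZ : S n `&` Z `<=` set0 by move=> x [Snx /ZU]; apply; exists n => /=.
have le_sup : \sum_(x \in S n `|` Z) f x <= sup E.
  by apply: ub_le_sup supE.2 _ _; exists (S n `|` Z) => //; rewrite finite_setU.
rewrite fsbigU0 //= in le_sup; rewrite -(lerD2l (\sum_(x \in S n) f x)).
apply: (le_trans le_sup); apply/ltW; rewrite -ltrBlDr; exact: ltS.
Qed.

End FiniteSums.

Section ComplexLimits.
Variable R : realType.
Implicit Types (u : nat -> R[i]) (w : R[i]).

Definition cabs2_cauchy u :=
  forall e : R, 0 < e -> exists N, forall m, (N <= m)%N -> cabs2 (u N - u m) < e.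

Definition clim u : R[i] :=
  (lim ((fun n => complex.Re (u n)) @ \oo) +i*
   lim ((fun n => complex.Im (u n)) @ \oo))%C.

Lemma cabs2_cauchy_cvg (p : R[i] -> R) u :
  (forall z w, (p z - p w) ^+ 2 <= cabs2 (z - w)) ->
  cabs2_cauchy u -> cvgn (fun n => p (u n)).
Proof.
move=> p_le u_cauchy; apply: cauchy_cvg; apply: cauchy_exP => e e_gt0.
have [N uN] := u_cauchy (e ^+ 2) (exprn_gt0 2 e_gt0).
exists (p (u N)); exists N => // m /= /uN lt_e.
rewrite /ball /= -ltr_sqr ?nnegrE ?normr_ge0 ?ltW // -normrX ger0_norm ?sqr_ge0 //.
by apply: le_lt_trans lt_e.
Qed.

Lemma cvg_cabs2_clim u w : cabs2_cauchy u ->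
  (fun m => cabs2 (u m - w)) @ \oo --> cabs2 (clim u - w).
Proof.
move=> u_cauchy.
have ReB : {morph @complex.Re R : z w / z - w} by move=> [? ?] [? ?].
have ImB : {morph @complex.Im R : z w / z - w} by move=> [? ?] [? ?].
have partB (p : R[i] -> R) : {morph p : z w / z - w} ->
    (forall z w, (p z - p w) ^+ 2 <= cabs2 (z - w)) ->
    (fun m => p (u m - w) ^+ 2) @ \oo --> (lim ((fun n => p (u n)) @ \oo) - p w) ^+ 2.
  move=> pB p_le; rewrite expr2; under eq_cvg do rewrite pB expr2.
  have cvg_pu := cabs2_cauchy_cvg p_le u_cauchy.
  by apply: cvgM; apply: cvgB => //; apply: cvg_cst.
under eq_cvg do rewrite cabs2E.
rewrite cabs2E ReB ImB /=.
by apply: cvgD; apply: partB => //; [apply: cabs2_ReB | apply: cabs2_ImB].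
Qed.

End ComplexLimits.

Section L2Bounds.
Variables (R : realType) (G : groupType).
Implicit Types (u v xi : G -> R[i]) (T : op R G) (b : R).

Definition l2sq_le v b :=
  forall X, finite_set X -> \sum_(h \in X) cabs2 (v h) <= b.

Lemma finsuppMl (k c : G -> R[i]) : finsupp c -> finsupp (fun g => k g * c g).
Proof. by apply: sub_finite_set => g /=; apply: contra => /eqP ->; rewrite mulr0. Qed.

Lemma supportB (c1 c2 : G -> R[i]) :
  [set g | c1 g - c2 g != 0] `<=` [set g | c1 g != 0] `|` [set g | c2 g != 0].
Proof.
move=> g /=; have [->|] := eqVneq (c1 g) 0; last by left.
by have [->|] := eqVneq (c2 g) 0; [rewrite subrr eqxx | right].
Qed.

Lemma finsuppB (c1 c2 : G -> R[i]) :
  finsupp c1 -> finsupp c2 -> finsupp (fun g => c1 g - c2 g).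
Proof. by move=> fc1 fc2; apply: sub_finite_set (@supportB c1 c2) _; rewrite finite_setU. Qed.

Lemma finsupp_patch (F : set G) (a : G -> R[i]) :
  finite_set F -> finsupp (patch (fun=> 0) F a).
Proof.
move=> finF; apply: sub_finite_set finF => g /=; rewrite /patch.
by case: ifP => [/set_mem // | _]; rewrite eqxx.
Qed.

Definition l2sum v : R := \sum_(g \in [set: G]) cabs2 (v g).

Lemma l2sq_le_ge0 v b : l2sq_le v b -> 0 <= b.
Proof. by move/(_ set0 (finite_set0 _)); rewrite fsbig_set0. Qed.

Lemma l2sq_le_scale u v (k : R) b : 0 <= k ->
  (forall g, cabs2 (u g) <= k * cabs2 (v g)) -> l2sq_le v b -> l2sq_le u (k * b).
Proof.
move=> k_ge0 uv v_le X finX; apply: le_trans (ler_wpM2l k_ge0 (v_le X finX)).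
by rewrite mulr_fsumr; apply: ler_fsum => // g _; apply: uv.
Qed.

Lemma l2sum_supp v : l2sum v = \sum_(g \in [set g | v g != 0]) cabs2 (v g).
Proof.
apply/esym/fsbig_widen => // g [_ /negP]; rewrite negbK => /eqP vg0.
by rewrite /preimage /= vg0 cabs20.
Qed.

Lemma l2sq_le_l2sum v : finsupp v -> l2sq_le v (l2sum v).
Proof.
move=> fv X finX; rewrite fsbig_supp l2sum_supp; apply: fsum_le_subset => //.
- by move=> g [_ /=]; apply: contra_not_neq => ->; rewrite cabs20.
- by move=> g _; apply: cabs2_ge0.
Qed.

Lemma l2norm_leP v b : 0 <= b -> (l2norm v <= b%:E)%E <-> l2sq_le v (b ^+ 2).
Proof.
move=> b_ge0; have -> : b%:E = sqrte (b ^+ 2)%:E by rewrite /= sqrtr_sqr ger0_norm.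
rewrite /l2norm lee_sqrt ?lee_fin ?sqr_ge0 //; split.
- move=> le_b X finX; rewrite -lee_fin -fsumEFin //.
  by apply: le_trans le_b; apply: ereal_sup_ubound; exists X.
- move=> le_b; apply: ge_ereal_sup => _ [X [finX _] <-].
  by rewrite fsumEFin // lee_fin; apply: le_b.
Qed.

Lemma sqrt_l2sum_le_l2norm v : finsupp v -> ((Num.sqrt (l2sum v))%:E <= l2norm v)%E.
Proof.
move=> fv; rewrite /l2norm -[X in (X <= _)%E]/(sqrte (l2sum v)%:E).
rewrite lee_sqrt; last by apply: esum_ge0 => g _; rewrite lee_fin cabs2_ge0.
apply: esum_ge; exists [set g | v g != 0] => //.
by rewrite fsumEFin // l2sum_supp.
Qed.

Lemma opnorm_leP T b : 0 <= b ->
  (opnorm T <= b%:E)%E <-> (forall xi, l2sq_le xi 1 -> l2sq_le (T xi) (b ^+ 2)).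
Proof.
have l2norm_le1 xi : (l2norm xi <= 1)%E <-> l2sq_le xi 1.
  by rewrite -[X in l2sq_le _ X](expr1n _ 2); apply: l2norm_leP.
move=> b_ge0; split.
- move=> le_b xi /l2norm_le1 xi_le1; apply/l2norm_leP => //.
  by apply: le_trans le_b; apply: ereal_sup_ubound; exists xi.
- move=> le_b; apply: ge_ereal_sup => _ [xi /= /l2norm_le1 xi_le1 <-].
  by apply/l2norm_leP => //; apply: le_b.
Qed.

Lemma l2norm_le_opnorm T xi : (l2norm xi <= 1)%E -> (l2norm (T xi) <= opnorm T)%E.
Proof. by move=> xi_le1; apply: ereal_sup_ubound; exists xi. Qed.

Lemma opnorm_ge0 T : (0 <= opnorm T)%E.
Proof.
apply: le_trans (l2norm_le_opnorm T (xi := fun=> 0) _); first exact: sqrte_ge0.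
by apply/(l2norm_leP _ ler01) => X _; rewrite fsbig1 // => h _; rewrite cabs20.
Qed.

Lemma l2sq_le_patchB (a : G -> R[i]) (U F1 F2 : set G) e :
  (forall Z, finite_set Z -> Z `<=` ~` U -> \sum_(g \in Z) cabs2 (a g) <= e) ->
  U `<=` F1 -> U `<=` F2 ->
  l2sq_le (fun g => patch (fun=> 0) F1 a g - patch (fun=> 0) F2 a g) e.
Proof.
move=> a_tail UF1 UF2 X finX; set Z := X `&` ~` U.
rewrite -(fsbig_widen Z X); [| exact: subIsetl |]; last first.
  move=> g [Xg /not_andP[// | /contrapT Ug]]; rewrite /preimage /= /patch.
  by rewrite (mem_set (UF1 g Ug)) (mem_set (UF2 g Ug)) subrr cabs20.
apply: le_trans (a_tail Z (finite_setIl _ finX) (@subIsetr _ _ _)).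
apply: ler_fsum => [|g _]; first exact: finite_setIl.
rewrite /patch; case: ifP => _; case: ifP => _;
  by rewrite ?subrr ?subr0 ?sub0r ?cabs2N ?cabs20 ?cabs2_ge0.
Qed.

End L2Bounds.

Section TwistedConvolution.
Variables (R : realType) (G : groupType).
Implicit Types (sigma : G -> G -> R[i]) (c f xi : G -> R[i]).

(* Meant for finitely supported [c]: over an infinite support [fsbig] is 0. *)
Definition lambda_sum sigma c : op R G :=
  fun xi h => \sum_(g \in [set: G]) c g * Lambda sigma g xi h.

Lemma lambda_sum_widen sigma c (A : set G) xi h :
  [set g | c g != 0] `<=` A ->
  lambda_sum sigma c xi h = \sum_(g \in A) c g * Lambda sigma g xi h.
Proof.
move=> cA; apply/esym/fsbig_widen => // g [_ Ag].
have /negP : ~ (c g != 0) by move/cA.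
by rewrite negbK /preimage /= => /eqP ->; rewrite mul0r.
Qed.

Lemma pi_sigmaE sigma f : pi_sigma sigma f = lambda_sum sigma f.
Proof.
by apply/funext => xi; apply/funext => h; rewrite (lambda_sum_widen _ _ _ (@subset_refl _ _)).
Qed.

Lemma MpartialE sigma phi x (F : set G) : Mpartial sigma phi x F =
  lambda_sum sigma (fun g => phi g * patch (fun=> 0) F (xhat x) g).
Proof.
apply/funext => xi; apply/funext => h; rewrite /Mpartial /lambda_sum fsbig_mkcond.
by apply: eq_fsbigr => g _; rewrite /patch; case: ifP; rewrite ?mulr0 ?mul0r.
Qed.

Lemma lambda_sumZ sigma (k : R[i]) c xi h :
  lambda_sum sigma (fun g => k * c g) xi h = k * lambda_sum sigma c xi h.
Proof. by rewrite /lambda_sum mulr_fsumr; apply: eq_fsbigr => g _; apply/esym/mulrA. Qed.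

Lemma lambda_sumB sigma c1 c2 xi h : finsupp c1 -> finsupp c2 ->
  lambda_sum sigma (fun g => c1 g - c2 g) xi h =
  lambda_sum sigma c1 xi h - lambda_sum sigma c2 xi h.
Proof.
move=> fc1 fc2; set A := [set g | c1 g != 0] `|` [set g | c2 g != 0].
have c12A := @supportB R G c1 c2.
rewrite !(@lambda_sum_widen _ _ A) // ?fsbig_finite -?sumrB ?finite_setU //.
- by apply: eq_bigr => g _; rewrite mulrBl.
- by move=> g; right.
- by move=> g; left.
Qed.

Lemma MpartialB sigma phi x (F1 F2 : set G) xi h : finite_set F1 -> finite_set F2 ->
  Mpartial sigma phi x F1 xi h - Mpartial sigma phi x F2 xi h =
  lambda_sum sigma (fun g => phi g * (patch (fun=> 0) F1 (xhat x) g -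
                                      patch (fun=> 0) F2 (xhat x) g)) xi h.
Proof.
move=> /(finsupp_patch (xhat x))/(finsuppMl phi) fp1.
move=> /(finsupp_patch (xhat x))/(finsuppMl phi) fp2.
rewrite !MpartialE -(lambda_sumB _ _ _ fp1 fp2).
by congr lambda_sum; apply/funext => g; rewrite mulrBr.
Qed.

Lemma xhat_pi_sigma sigma f :
  (forall g, sigma g 1%g = 1) -> xhat (pi_sigma sigma f) = f.
Proof.
move=> sigma_g1; apply/funext => h; rewrite pi_sigmaE /xhat.
rewrite (lambda_sum_widen _ _ _ (subsetT _)) -(fsbig_widen [set h]) //.
  by rewrite fsbig_set1 /Lambda mulVg /delta_e eqxx sigma_g1 !mulr1.
move=> g [_ /= /eqP gh]; rewrite /preimage /= /Lambda /delta_e.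
case: eqP => [g'h1 | _]; last by rewrite !mulr0.
by move: gh; rewrite -(mulVKg g h) g'h1 mulg1 eqxx.
Qed.

Lemma l2sq_le_delta : l2sq_le (@delta_e R G) 1.
Proof.
have delta_supp : [set g | @delta_e R G g != 0] = [set 1%g].
  apply/seteqP; split=> g /=; rewrite /delta_e.
    by case: ifP => [/eqP -> | _]; rewrite ?eqxx.
  by move=> ->; rewrite eqxx oner_eq0.
have := @l2sq_le_l2sum R G (@delta_e R G).
rewrite l2sum_supp delta_supp fsbig_set1 /delta_e eqxx cabs21; apply.
by rewrite /finsupp delta_supp; apply: finite_set1.
Qed.

Lemma lambda_sum_le_pi_lambda_norm sigma c xi h :
  (forall g k, cabs (sigma g k) = 1) -> finsupp c ->
  cabs2 (lambda_sum sigma c xi h) <=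
  cabs2 (pi_lambda (fun g => `|c g|) (fun g => `|xi g|) h).
Proof.
move=> sigma_unit fc; rewrite /pi_lambda pi_sigmaE.
have c_supp : [set g | `|c g| != 0] `<=` [set g | c g != 0].
  by move=> g /=; rewrite normr_eq0.
rewrite (lambda_sum_widen _ _ _ (@subset_refl _ [set g | c g != 0])).
rewrite (lambda_sum_widen _ _ _ c_supp) !fsbig_finite //; apply: cabs2_le_norm.
rewrite [leRHS]ger0_norm; last first.
  by apply: sumr_ge0 => g _; rewrite /Lambda /trivial_cocycle mul1r mulr_ge0.
apply: le_trans (ler_norm_sum _ _ _) _; apply: ler_sum => g _.
rewrite /Lambda /trivial_cocycle mul1r !normrM.
have -> : `|sigma g (g^-1 * h)%g| = ((cabs (sigma g (g^-1 * h)%g))%:C)%C by [].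
by rewrite sigma_unit mul1r.
Qed.

Lemma xhat_l2sq_le sigma x : (forall g, sigma g 1%g = 1) ->
  in_Cr sigma x -> exists B, l2sq_le (xhat x) B.
Proof.
move=> sigma_g1 /(_ 1 ltr01) [f [ff x_f]]; exists (2 + 2 * l2sum f) => X finX.
have := (opnorm_leP _ ler01).1 x_f _ l2sq_le_delta X finX.
rewrite expr1n /opsub -/(xhat _) -/(xhat _) xhat_pi_sigma // => x_f_le1.
have f_le := l2sq_le_l2sum ff finX.
pose bound h := 2 * cabs2 (xhat x h - f h) + 2 * cabs2 (f h).
apply: le_trans (ler_fsum (g := bound) finX _) _.
  by move=> h _; have := cabs2D_le (xhat x h - f h) (f h); rewrite subrK.
by rewrite fsbig_split //= -!mulr_fsumr; lra.
Qed.

End TwistedConvolution.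

Section Decay.
Variables (R : realType) (G : groupType) (kappa : G -> R) (C : R).
Hypothesis decayC : decay_constant kappa = C%:E.
Implicit Types (sigma : G -> G -> R[i]) (c F xi : G -> R[i]).

Local Notation weighted c := (fun g => c g * ((kappa g)%:C)%C).

Lemma opnorm_pi_lambda_le F : finsupp F -> l2sq_le (weighted F) 1 ->
  (opnorm (pi_lambda F) <= C%:E)%E.
Proof.
move=> fF F_le1; rewrite -decayC; apply: ereal_sup_ubound; exists F => //.
by split=> //; apply/(l2norm_leP _ ler01); rewrite expr1n.
Qed.

Lemma decay_constant_ge0 : 0 <= C.
Proof.
rewrite -lee_fin.
apply: le_trans (opnorm_ge0 _) (opnorm_pi_lambda_le (F := fun=> 0) _ _).
- by apply: sub_finite_set (finite_set0 G) => g /=; rewrite eqxx.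
- by move=> X _; rewrite fsbig1 // => g _; rewrite mul0r cabs20.
Qed.

(* Homogeneity: rescale [F] into the unit ball of the weighted norm, with an
   [e] of slack so that the rescaling factor is positive even when [b = 0]. *)
Lemma pi_lambda_decay F xi b : finsupp F -> l2sq_le xi 1 ->
  l2sq_le (weighted F) b -> l2sq_le (pi_lambda F xi) (C ^+ 2 * b).
Proof.
move=> fF xi_le1 F_le X finX; have b_ge0 := l2sq_le_ge0 F_le.
have C_ge0 := decay_constant_ge0.
suff le_eps e : 0 < e -> \sum_(h \in X) cabs2 (pi_lambda F xi h) <= C ^+ 2 * (b + e).
  apply/ler_addgt0Pr => e e_gt0; set d := e / (C ^+ 2 + 1).
  have d_gt0 : 0 < d by rewrite divr_gt0 // ltr_wpDl ?sqr_ge0.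
  have e_d : e = d * (C ^+ 2 + 1) by rewrite divfK // gt_eqF // ltr_wpDl ?sqr_ge0.
  by apply: le_trans (le_eps d d_gt0) _; rewrite e_d; nra.
move=> e_gt0; have be_gt0 : 0 < b + e by rewrite ltr_wpDl.
set t := Num.sqrt (b + e).
have t_gt0 : 0 < t by rewrite sqrtr_gt0.
have t2 : t ^+ 2 = b + e by rewrite sqr_sqrtr // ltW.
pose F' g := ((t^-1)%:C)%C * F g.
have fF' : finsupp F' := finsuppMl (fun=> _) fF.
have F'_le1 : l2sq_le (weighted F') 1.
  have F'_le : l2sq_le (weighted F') (t^-1 ^+ 2 * b).
    apply: l2sq_le_scale F_le => [|g]; first exact: sqr_ge0.
    by rewrite /F' -mulrA !cabs2M !cabs2_real.
  move=> Y finY; apply: le_trans (F'_le Y finY) _.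
  by rewrite exprVn t2 ler_pdivrMl // mulr1 lerDl ltW.
have := (opnorm_leP _ C_ge0).1 (opnorm_pi_lambda_le fF' F'_le1) xi xi_le1 X finX.
have piF : pi_lambda F xi = fun h => (t%:C)%C * pi_lambda F' xi h.
  apply/funext => h; rewrite /pi_lambda !pi_sigmaE lambda_sumZ mulrA -rmorphM /=.
  by rewrite divff ?gt_eqF // mul1r.
rewrite -t2 piF => le_C.
under eq_fsbigr do rewrite cabs2M cabs2_real.
by rewrite -mulr_fsumr mulrC ler_wpM2r // sqr_ge0.
Qed.

Lemma lambda_sum_decay sigma c xi b : (forall g k, cabs (sigma g k) = 1) ->
  finsupp c -> l2sq_le xi 1 -> l2sq_le (weighted c) b ->
  l2sq_le (lambda_sum sigma c xi) (C ^+ 2 * b).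
Proof.
move=> sigma_unit fc xi_le1 c_le X finX.
have fc' : finsupp (fun g => `|c g|).
  by apply: sub_finite_set fc => g /=; rewrite normr_eq0.
have xi'_le1 : l2sq_le (fun h => `|xi h|) 1.
  by rewrite -[1]mul1r; apply: l2sq_le_scale xi_le1 => // h; rewrite cabs2_norm mul1r.
have c'_le : l2sq_le (weighted (fun g => `|c g|)) b.
  rewrite -[b]mul1r; apply: l2sq_le_scale c_le => // g.
  by rewrite !cabs2M cabs2_norm mul1r.
apply: le_trans (pi_lambda_decay fc' xi'_le1 c'_le finX).
by apply: ler_fsum => // h _; apply: lambda_sum_le_pi_lambda_norm.
Qed.

End Decay.

Section Multiplier.
Variables (R : realType) (G : groupType) (kappa : G -> R) (C : R).
Variables (psi : G -> R[i]) (K : R) (sigma : G -> G -> R[i]).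
Hypothesis decayC : decay_constant kappa = C%:E.
Hypotheses (kappa_ge0 : forall g, 0 <= kappa g)
  (psi_kappa_le : forall g, cabs (psi g) * kappa g <= K).
Hypotheses (sigma_unit : forall g h, cabs (sigma g h) = 1)
  (sigma_g1 : forall g, sigma g 1%g = 1).
Implicit Types (c f xi : G -> R[i]).

Lemma multiplier_bound_ge0 : 0 <= K.
Proof. exact: le_trans (mulr_ge0 (cabs_ge0 _) (kappa_ge0 1%g)) (psi_kappa_le 1%g). Qed.

Lemma lambda_sum_mul_decay c xi b : finsupp c -> l2sq_le xi 1 -> l2sq_le c b ->
  l2sq_le (lambda_sum sigma (fun g => psi g * c g) xi) ((C * K) ^+ 2 * b).
Proof.
move=> fc xi_le1 c_le; rewrite exprMn -mulrA.
apply: (lambda_sum_decay decayC) (finsuppMl psi fc) xi_le1 _ => //.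
apply: l2sq_le_scale c_le => [|g]; first exact: sqr_ge0.
rewrite !cabs2M cabs2_real mulrAC /cabs2 -exprMn ler_wpM2r ?sqr_ge0 //.
by rewrite ler_sqr ?nnegrE ?mulr_ge0 ?cabs_ge0 ?multiplier_bound_ge0.
Qed.

Lemma opnorm_pi_sigma_mul f : finsupp f ->
  (opnorm (pi_sigma sigma (fun g => (psi g * f g)%R))
     <= (C * K)%:E * opnorm (pi_sigma sigma f))%E.
Proof.
move=> ff; have C_ge0 := decay_constant_ge0 decayC.
have CK_ge0 : 0 <= C * K by rewrite mulr_ge0 ?multiplier_bound_ge0.
have l2sum_ge0 : 0 <= l2sum f by apply: fsumr_ge0 => g _; apply: cabs2_ge0.
apply: (@le_trans _ _ ((C * K * Num.sqrt (l2sum f))%:E)).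
  apply/opnorm_leP => [|xi xi_le1]; first by rewrite mulr_ge0 ?sqrtr_ge0.
  rewrite pi_sigmaE exprMn sqr_sqrtr //.
  exact: lambda_sum_mul_decay ff xi_le1 (l2sq_le_l2sum ff).
rewrite EFinM lee_wpmul2l ?lee_fin //; apply: le_trans (sqrt_l2sum_le_l2norm ff) _.
rewrite -[X in l2norm X](xhat_pi_sigma f sigma_g1); apply: l2norm_le_opnorm.
by apply/(l2norm_leP _ ler01); rewrite expr1n; apply: l2sq_le_delta.
Qed.

Lemma l2sq_le_MpartialB x (U F1 F2 : set G) xi e :
  (forall Z, finite_set Z -> Z `<=` ~` U -> \sum_(g \in Z) cabs2 (xhat x g) <= e) ->
  finite_set F1 -> finite_set F2 -> U `<=` F1 -> U `<=` F2 -> l2sq_le xi 1 ->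
  l2sq_le (fun h => Mpartial sigma psi x F1 xi h - Mpartial sigma psi x F2 xi h)
    ((C * K) ^+ 2 * e).
Proof.
move=> x_tail finF1 finF2 UF1 UF2 xi_le1 X finX.
under eq_fsbigr do rewrite MpartialB //.
apply: lambda_sum_mul_decay xi_le1 (l2sq_le_patchB x_tail UF1 UF2) _ finX.
exact: finsuppB (finsupp_patch _ finF1) (finsupp_patch _ finF2).
Qed.

Lemma multiplier_MCF : MCF sigma psi.
Proof.
move=> x x_in; have [B x_le] := xhat_l2sq_le sigma_g1 x_in.
have [U [finU U_mono x_tail]] := fsum_tails x_le.
pose T m := Mpartial sigma psi x (U m).
have T_cauchy xi h : l2sq_le xi 1 -> cabs2_cauchy (fun m => T m xi h).
  move=> xi_le1 e e_gt0; have [N N_lt] := exists_natSinv_lt ((C * K) ^+ 2) e_gt0.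
  exists N => m Nm; apply: le_lt_trans N_lt.
  have := l2sq_le_MpartialB (x_tail N) (finU N) (finU m) (@subset_refl _ _)
    (U_mono _ _ Nm) xi_le1 (finite_set1 h).
  by rewrite fsbig_set1.
exists (fun xi h => clim (fun m => T m xi h)) => eps eps_gt0.
have [N N_lt] := exists_natSinv_lt ((C * K) ^+ 2) (exprn_gt0 2 eps_gt0).
exists (U N); split=> // F finF UNF.
apply/opnorm_leP => [|xi xi_le1 X finX]; first exact: ltW.
apply: (cvgr_to_le (F := \oo) (f := fun m =>
  \sum_(h \in X) cabs2 (T m xi h - Mpartial sigma psi x F xi h))).
  rewrite /opsub fsbig_finite //; under eq_cvg do rewrite fsbig_finite //.
  apply: (@cvg_big _ _ +%R 0 xpredT add_continuous) => // h _.
  exact: cvg_cabs2_clim (T_cauchy _ _ xi_le1).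
exists N => // m /= Nm; apply: le_trans (ltW N_lt).
exact: l2sq_le_MpartialB (x_tail N) (finU m) finF (U_mono _ _ Nm) UNF xi_le1 X finX.
Qed.

End Multiplier.

Theorem proposition4p8 (R : realType) (G : groupType)
  (kappa : G -> R) (C : R) (psi : G -> R[i]) (K : R) :
  (forall g, 1 <= kappa g) ->
  kappa_decaying kappa ->
  decay_constant kappa = C%:E ->
  ereal_sup [set ((cabs (psi g)) * kappa g)%:E | g in [set: G]] = K%:E ->
  forall sigma : G -> G -> R[i], normalized_2cocycle sigma ->
    MCF sigma psi /\
    (forall f : G -> R[i], finsupp f ->
       (opnorm (pi_sigma sigma (fun g => (psi g * f g)%R))
          <= (C * K)%:E * opnorm (pi_sigma sigma f))%E).
Proof.
move=> kappa_ge1 _ decayC supK sigma [sigma_unit _ sigma_g1 _].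
have kappa_ge0 g : 0 <= kappa g by apply: le_trans (kappa_ge1 g).
have psi_kappa_le g : cabs (psi g) * kappa g <= K.
  by rewrite -lee_fin -supK; apply: ereal_sup_ubound; exists g.
split; first exact: multiplier_MCF decayC kappa_ge0 psi_kappa_le sigma_unit sigma_g1.
exact: opnorm_pi_sigma_mul decayC kappa_ge0 psi_kappa_le sigma_unit sigma_g1.
Qed.
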